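(* For any integers $n\ge1$ and $m\ge1$ there exist instances of the dynamic model in the context with $|\mathcal U_0|\ge n$ and $|\mathcal C_0|\ge m$ such that $\mathrm{LTE}(\mathbf{FL})>0$ and $$\frac{\mathrm{LTE}(\mathbf{UC})}{\mathrm{LTE}(\mathbf{FL})}=0.$$
   Context: An instance consists of a dimension $D$, users $\mathcal U_0=\{1,\dots,U\}$ with types $u_i\in\mathbb R^D_{\ge0}$, creators $\mathcal C_0=\{1,\dots,C\}$ with types $c_j\in\mathbb R^D_{\ge 0}$, all of Euclidean norm $1$, a positive integer $K$, a creator threshold $\bar a\in\mathbb N_0$ and a user threshold $\bar e\in[0,1]$. Time $t=0,1,2,\dots$; at time $t$ the platform has sets $\mathcal U_t\subseteq\mathcal U_0$, $\mathcal C_t\subseteq\mathcal C_0$ and chooses a recommendation $R_t$ assigning each $i\in\mathcal U_t$ a set $R_t(i)\subseteq\mathcal C_t$ of size $K$ (of smaller size only if necessary, e.g. $|\mathcal C_t|<K$). Engagement is $E(\mathcal U,\mathcal C,R)=\sum_{i\in\mathcal U}\sum_{j\in R(i)}u_i^Tc_j$. Then $\mathcal U_{t+1}=\{i\in\mathcal U_t:|R_t(i)|=K,\ u_i^Tc_j\ge\bar e\ \forall j\in R_t(i)\}$ and $\mathcal C_{t+1}=\{j\in\mathcal C_t:|\{i\in\mathcal U_t:j\in R_t(i)\}|\ge\bar a\}$. For a sequence $\mathbf R=(R_0,R_1,\dots)$, $\mathrm{LTE}(\mathbf R)=\lim_{T\to\infty}\frac1T\sum_{t=0}^{T-1}E(\mathcal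 U_t,\mathcal C_t,R_t)$. $\mathbf{FL}$ denotes any sequence maximizing $\mathrm{LTE}$. $\mathbf{UC}$ is the user-centric sequence with $UC_t(i)\in\arg\max_{S\subseteq\mathcal C_t,|S|\le K}\sum_{j\in S}u_i^Tc_j$ for all $t$ and $i\in\mathcal U_t$ (each user gets her $K$ highest-engagement remaining creators, or all remaining creators if fewer than $K$). *)

From HB Require Import structures.
From mathcomp Require Import all_boot all_order all_algebra.
From mathcomp Require Import all_classical all_reals all_analysis.
Set Implicit Arguments. Unset Strict Implicit. Unset Printing Implicit Defensive.
Import Order.TTheory GRing.Theory Num.Theory.
Import numFieldNormedType.Exports.
Local Open Scope ring_scope.

Section Model.
Variable R : realType.
Variables D U C : nat.
Variable u : 'I_U -> 'I_D -> R.
Variable c : 'I_C -> 'I_D -> R.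
Variable K abar : nat.
Variable ebar : R.

Definition valid_instance : Prop :=
  [/\ (forall i k, 0 <= u i k), (forall j k, 0 <= c j k),
      (forall i, \sum_(k < D) u i k ^+ 2 = 1),
      (forall j, \sum_(k < D) c j k ^+ 2 = 1) &
      (0 < K)%N /\ 0 <= ebar <= 1].

Definition eng (i : 'I_U) (j : 'I_C) : R := \sum_(k < D) u i k * c j k.

Definition recommendation := 'I_U -> {set 'I_C}.
Definition recseq := nat -> recommendation.

Definition state := ({set 'I_U} * {set 'I_C})%type.

Definition step (s : state) (Rt : recommendation) : state :=
  ([set i in s.1 | (#|Rt i| == K) && [forall j in Rt i, ebar <= eng i j]],
   [set j in s.2 | (abar <= #|[set i in s.1 | j \in Rt i]|)%N]).

Fixpoint traj (Rs : recseq) (t : nat) : state :=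
  match t with
  | 0 => ([set: 'I_U]%SET, [set: 'I_C]%SET)
  | t'.+1 => step (traj Rs t') (Rs t')
  end.

Definition Us (Rs : recseq) t := (traj Rs t).1.
Definition Cs (Rs : recseq) t := (traj Rs t).2.

Definition engagement (Uset : {set 'I_U}) (Rt : recommendation) : R :=
  \sum_(i in Uset) \sum_(j in Rt i) eng i j.

(* feasibility: every active user gets a subset of the active creators of size K,
   smaller only if necessary, i.e. of size min(K, |C_t|) *)
Definition feasible (Rs : recseq) : Prop :=
  forall t i, i \in Us Rs t ->
    Rs t i \subset Cs Rs t /\ #|Rs t i| = minn K #|Cs Rs t|.

Definition is_LTE (Rs : recseq) (L : R) : Prop :=
  ((fun T : nat => (T%:R)^-1 * \sum_(t < T) engagement (Us Rs t) (Rs t)) @ \oo --> L)%classic.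

Definition is_FL (Rs : recseq) (L : R) : Prop :=
  [/\ feasible Rs, is_LTE Rs L &
      forall Rs' L', feasible Rs' -> is_LTE Rs' L' -> L' <= L].

Definition is_UC (Rs : recseq) : Prop :=
  feasible Rs /\
  forall t i, i \in Us Rs t ->
    forall S : {set 'I_C}, S \subset Cs Rs t -> (#|S| <= K)%N ->
      \sum_(j in S) eng i j <= \sum_(j in Rs t i) eng i j.

End Model.

(* Take N >= 2 users and K = 1.  User i values its own niche creator at 4/5 and
   each of the m mainstream creators at 3/5; the user threshold is 1/2 and the
   creator threshold is N, so a creator survives a round only if every user was
   recommended to it.  UC sends every user to her own niche creator at time 0,
   so no creator keeps all N users and the platform is empty from time 1 on:
   LTE(UC) = 0.  Recommending one mainstream creator to everybody keeps everyone
   forever, with engagement 3N/5 per round.  This is optimal: a niche creator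
   that survives to round t+1 was shown to a user who values it at 0 < 1/2, that
   user leaves, and so no creator survives to round t+2.  Hence in every feasible
   sequence the engagement is eventually at most 3N/5, which bounds its Cesaro
   limit. *)

From Pilot Require Import Defs.
From mathcomp Require Import all_boot all_order all_algebra.
From mathcomp Require Import all_classical all_reals all_analysis.
From mathcomp Require Import lra.

Set Implicit Arguments.
Unset Strict Implicit.
Unset Printing Implicit Defensive.
Import Order.TTheory GRing.Theory Num.Theory.
Import numFieldNormedType.Exports.
Local Open Scope ring_scope.

Section CesaroMean.
Variable R : realType.
Local Open Scope classical_set_scope.

Definition cesaro_mean (f : nat -> R) (T : nat) : R := T%:R^-1 * \sum_(t < T) f t.

Lemma cesaro_mean_cvg (f : nat -> R) (l : R) :
  f @ \oo --> l -> cesaro_mean f @ \oo --> l.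
Proof.
move=> /cesaro fl; rewrite -cvg_shiftS.
suff -> : [sequence cesaro_mean f T.+1]_T = arithmetic_mean f by [].
by apply/funext => T; rewrite /arithmetic_mean /= seriesEnat /= big_mkord.
Qed.

Lemma cesaro_mean_le (f : nat -> R) (B L : R) :
  (\forall t \near \oo, f t <= B) -> cesaro_mean f @ \oo --> L -> L <= B.
Proof.
move=> fB fL.
have maxB : (fun t => Num.max (f t) B) @ \oo --> B.
  by apply: cvg_near_cst; near do apply/max_idPr.
apply: (ler_cvg_to fL (cesaro_mean_cvg maxB)); near=> T.
by rewrite ler_wpM2l ?invr_ge0 // ler_sum // => t _; rewrite le_max lexx.
Unshelve. all: by end_near.
Qed.

End CesaroMean.

Lemma sum_mul_indicator (R : pzSemiRingType) (I : finType) (F : I -> R) (k0 : I) :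
  \sum_k F k * (k == k0)%:R = F k0.
Proof.
by under eq_bigr do rewrite mulr_natr mulrb; rewrite -big_mkcond big_pred1_eq.
Qed.

Section Dynamics.
Variables (R : realType) (D U C : nat).
Variables (u : 'I_U -> 'I_D -> R) (c : 'I_C -> 'I_D -> R).
Variables (K abar : nat) (ebar : R).

Local Notation Us := (Us u c K abar ebar).
Local Notation Cs := (Cs u c K abar ebar).
Local Notation feasible := (feasible u c K abar ebar).
Local Notation eng := (eng u c).
Local Notation E Rs t := (engagement u c (Us Rs t) (Rs t)).

Lemma is_LTE_cesaro_mean (Rs : recseq U C) (L : R) :
  is_LTE u c K abar ebar Rs L = (cesaro_mean (fun t => E Rs t) @ \oo --> L)%classic.
Proof. by []. Qed.

Lemma eng_unit_creator i j k0 :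
  (forall k, c j k = (k == k0)%:R) -> eng i j = u i k0.
Proof.
by move=> cE; rewrite /Defs.eng; under eq_bigr do rewrite cE; exact: sum_mul_indicator.
Qed.

Lemma in_Us_succ Rs t i : (i \in Us Rs t.+1) =
  [&& i \in Us Rs t, #|Rs t i| == K & [forall j in Rs t i, ebar <= eng i j]].
Proof. by rewrite inE. Qed.

Lemma in_Cs_succ Rs t j : (j \in Cs Rs t.+1) =
  (j \in Cs Rs t) && (abar <= #|[set i in Us Rs t | j \in Rs t i]|)%N.
Proof. by rewrite inE. Qed.

Lemma Cs_succ_subset Rs t : Cs Rs t.+1 \subset Cs Rs t.
Proof. by apply/fintype.subsetP => j; rewrite in_Cs_succ => /andP[]. Qed.

Lemma Cs_set0_after Rs t t' :
  Cs Rs t = finset.set0 -> (t <= t')%N -> Cs Rs t' = finset.set0.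
Proof.
move=> Ct0 /subnKC <-; elim: (t' - t)%N => [|d IHd]; first by rewrite addn0.
by apply/eqP; rewrite -finset.subset0 -IHd addnS Cs_succ_subset.
Qed.

Lemma engagement_Cs_set0 Rs t : feasible Rs -> Cs Rs t = finset.set0 -> E Rs t = 0.
Proof.
move=> feas Ct0; apply: big1 => i iU.
by have [+ _] := feas t i iU; rewrite Ct0 finset.subset0 => /eqP ->; rewrite big_set0.
Qed.

Lemma engagement_le Rs t (b : R) : feasible Rs -> 0 <= b ->
  (forall i j, i \in Us Rs t -> j \in Rs t i -> eng i j <= b) ->
  E Rs t <= (U * K)%N%:R * b.
Proof.
move=> feas b_ge0 engb.
have sizeK i : i \in Us Rs t -> (#|Rs t i| <= K)%N.
  by move=> iU; have [_ ->] := feas t i iU; exact: geq_minl.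
apply: (@le_trans _ _ (\sum_(i in Us Rs t) K%:R * b)).
  apply: ler_sum => i iU; apply: (@le_trans _ _ (\sum_(j in Rs t i) b)).
    by apply: ler_sum => j; exact: engb.
  by rewrite sumr_const -[b *+ _]mulr_natl ler_wpM2r // ler_nat sizeK.
rewrite sumr_const -[_ *+ _]mulr_natl natrM -mulrA ler_wpM2r ?mulr_ge0 // ler_nat.
by rewrite (leq_trans (max_card _)) ?card_ord.
Qed.

Lemma unanimous_creator Rs t i j : (U <= abar)%N -> j \in Cs Rs t.+1 ->
  i \in Us Rs t /\ j \in Rs t i.
Proof.
move=> Uabar; rewrite in_Cs_succ => /andP[_ abar_le].
suff : i \in [set i in Us Rs t | j \in Rs t i] by rewrite inE => /andP[].
suff -> : [set i in Us Rs t | j \in Rs t i] = [set: _]%SET by rewrite inE.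
by apply/eqP; rewrite eqEcard finset.subsetT cardsT card_ord (leq_trans Uabar).
Qed.

Lemma Cs_collapse Rs t i j :
  (U <= abar)%N -> j \in Cs Rs t.+1 -> eng i j < ebar -> Cs Rs t.+2 = finset.set0.
Proof.
move=> Uabar jC engj; apply/finset.setP => j'; rewrite finset.in_set0.
apply/negP => j'C.
have [+ _] := unanimous_creator i Uabar j'C.
rewrite in_Us_succ => /and3P[_ _ /forallP/(_ j)].
have [_ -> /=] := unanimous_creator i Uabar jC.
by rewrite leNgt engj.
Qed.

End Dynamics.

Section Instance.
Variables (R : realType) (N m : nat).
Hypotheses (N_gt1 : (1 < N)%N) (m_gt0 : (0 < m)%N).

Definition user (i : 'I_N) (k : 'I_N.+1) : R :=
  if k == ord_max then 3/5 else if (k : nat) == i then 4/5 else 0.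

(* Creators j < N are the niche creators e_j; the m creators j >= N are copies
   of the mainstream creator e_N. *)
Definition feature (j : 'I_(N + m)) : 'I_N.+1 := inord (minn j N).

Definition creator (j : 'I_(N + m)) (k : 'I_N.+1) : R := (k == feature j)%:R.

Definition threshold : R := 1/2.

Local Notation Us := (Us user creator 1 N threshold).
Local Notation Cs := (Cs user creator 1 N threshold).
Local Notation feasible := (feasible user creator 1 N threshold).
Local Notation is_LTE := (is_LTE user creator 1 N threshold).
Local Notation eng := (eng user creator).
Local Notation E Rs t := (engagement user creator (Us Rs t) (Rs t)).

Lemma feature_val j : feature j = minn j N :> nat.
Proof. by rewrite inordK // ltnS geq_minr. Qed.

Lemma eng_instance i j :
  eng i j = if (N <= j)%N then 3/5 else if (j : nat) == i then 4/5 else 0.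
Proof.
rewrite (eng_unit_creator user i (k0 := feature j)) //.
rewrite /user -val_eqE /= feature_val.
case: (leqP N j) => jN; first by rewrite eqxx.
by rewrite ifF // ltn_eqF.
Qed.

Lemma instance_valid : valid_instance user creator 1 threshold.
Proof.
split.
- by move=> i k; rewrite /user; case: ifP => _; [|case: ifP => _]; lra.
- by move=> j k; exact: ler0n.
- move=> i; rewrite big_ord_recr /= {2}/user eqxx.
  have -> : \sum_(k < N) user i (widen_ord (leqnSn N) k) ^+ 2 =
            \sum_(k < N) (4/5) ^+ 2 * (k == i)%:R.
    apply: eq_bigr => k _; rewrite /user -val_eqE /= ltn_eqF // val_eqE.
    by case: eqP => _; rewrite ?mulr1 ?mulr0 ?expr0n.
  by rewrite (sum_mul_indicator (fun=> (4/5) ^+ 2)); lra.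
- move=> j; rewrite /creator; under eq_bigr do rewrite expr2.
  by rewrite sum_mul_indicator eqxx.
- by split => //; rewrite /threshold; lra.
Qed.

Definition mainstream : 'I_(N + m) := rshift N (Ordinal m_gt0).

Lemma eng_mainstream i : eng i mainstream = 3/5.
Proof. by rewrite eng_instance leq_addr. Qed.

Lemma eng_own_niche i : eng i (lshift m i) = 4/5.
Proof. by rewrite eng_instance /= leqNgt ltn_ord eqxx. Qed.

Lemma exists_other_user (j : nat) : exists i : 'I_N, j != i.
Proof.
have [-> | j_neq0] := eqVneq j 0%N; first by exists (Ordinal N_gt1).
by exists (Ordinal (ltnW N_gt1)).
Qed.

Lemma niche_collapse Rs t (j : 'I_(N + m)) :
  j \in Cs Rs t.+1 -> (j < N)%N -> Cs Rs t.+2 = finset.set0.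
Proof.
move=> jC jN; have [i ji] := exists_other_user j.
apply: (Cs_collapse (i := i) (leqnn N) jC).
by rewrite eng_instance leqNgt jN /= (negbTE ji) /threshold; lra.
Qed.

Lemma engagement_mainstream_only Rs t : feasible Rs ->
  (forall j, j \in Cs Rs t -> (N <= j)%N) -> E Rs t <= N%:R * (3/5).
Proof.
move=> feas mainstream_only; rewrite -[N in N%:R]muln1.
apply: engagement_le => // i j iU jR.
have [RC _] := feas t i iU.
by rewrite eng_instance mainstream_only ?(fintype.subsetP RC).
Qed.

Lemma engagement_eventually_le Rs : feasible Rs ->
  (\forall t \near \oo, E Rs t <= N%:R * (3/5))%classic.
Proof.
move=> feas; have B_ge0 : 0 <= N%:R * (3/5) :> R by rewrite mulr_ge0 //; lra.
case: (pselect (exists t (j : 'I_(N + m)), j \in Cs Rs t.+1 /\ (j < N)%N)).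
  move=> [t [j [jC jN]]]; exists t.+2 => // t' tt'.
  by rewrite engagement_Cs_set0 // (Cs_set0_after (niche_collapse jC jN) tt').
move=> no_niche; exists 1%N => // -[|t] // _.
apply: engagement_mainstream_only => // j jC; rewrite leqNgt; apply/negP => jN.
by apply: no_niche; exists t, j.
Qed.

Lemma LTE_le_mainstream Rs L : feasible Rs -> is_LTE Rs L -> L <= N%:R * (3/5).
Proof.
move=> feas; rewrite is_LTE_cesaro_mean; apply: cesaro_mean_le.
exact: engagement_eventually_le.
Qed.

Definition mainstream_rec : recseq N (N + m) := fun _ _ => [set mainstream]%SET.

Lemma mainstream_rec_traj t :
  Us mainstream_rec t = [set: 'I_N]%SET /\ mainstream \in Cs mainstream_rec t.
Proof.
elim: t => [|t [Ut Ct]]; first by rewrite inE.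
have all_users : [set i in Us mainstream_rec t | mainstream \in mainstream_rec t i]%SET
    = [set: 'I_N]%SET by apply/finset.setP => i; rewrite Ut !inE eqxx.
split; last by rewrite in_Cs_succ Ct all_users cardsT card_ord /=.
apply/finset.setP => i; rewrite in_Us_succ Ut !inE cards1 /=.
by apply/forall_inP => j; rewrite inE => /eqP ->; rewrite eng_mainstream /threshold; lra.
Qed.

Lemma mainstream_rec_feasible : feasible mainstream_rec.
Proof.
move=> t i _; have [_ Ct] := mainstream_rec_traj t.
split; first by rewrite finset.sub1set.
rewrite cards1; apply/esym/minn_idPl; rewrite card_gt0.
by apply/finset.set0Pn; exists mainstream.
Qed.

Lemma engagement_mainstream_rec t : E mainstream_rec t = N%:R * (3/5).
Proof.
have [Ut _] := mainstream_rec_traj t; rewrite /engagement Ut.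
under eq_bigr do rewrite big_set1 eng_mainstream.
by rewrite sumr_const cardsT card_ord -[_ *+ N]mulr_natl.
Qed.

Lemma mainstream_rec_FL : is_FL user creator 1 N threshold mainstream_rec (N%:R * (3/5)).
Proof.
split; first exact: mainstream_rec_feasible.
  rewrite is_LTE_cesaro_mean; apply: cesaro_mean_cvg; apply: cvg_near_cst.
  by apply: nearW => t; rewrite engagement_mainstream_rec.
by move=> Rs L; exact: LTE_le_mainstream.
Qed.

Lemma UC_initial_own_niche Rs i (j : 'I_(N + m)) :
  is_UC user creator 1 N threshold Rs -> j \in Rs 0%N i -> j = lshift m i.
Proof.
move=> [feas best]; have iU : i \in Us Rs 0 by rewrite inE.
have C_gt0 : (0 < N + m)%N by rewrite (leq_trans (ltnW N_gt1)) ?leq_addr.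
have [_] := feas 0%N i iU; rewrite cardsT card_ord (minn_idPl C_gt0).
move=> /eqP/cards1P[j0 R0i]; rewrite R0i inE => /eqP ->.
have := best 0%N i iU [set lshift m i]%SET.
rewrite finset.sub1set inE cards1 R0i !big_set1.
rewrite eng_own_niche eng_instance => /(_ isT isT) le45.
apply/val_inj/eqP; apply: contraTT le45 => /negbTE j0i.
by rewrite -ltNge /= j0i; case: ifP => _; lra.
Qed.

Lemma UC_Cs1_set0 Rs : is_UC user creator 1 N threshold Rs -> Cs Rs 1 = finset.set0.
Proof.
move=> UC; apply/finset.setP => j; rewrite finset.in_set0; apply/negP => jC.
have own_niche i := UC_initial_own_niche UC (unanimous_creator i (leqnn N) jC).2.
have := own_niche (Ordinal N_gt1).
by rewrite (own_niche (Ordinal (ltnW N_gt1))) => /(congr1 val).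
Qed.

Lemma UC_LTE0 Rs : is_UC user creator 1 N threshold Rs -> is_LTE Rs 0.
Proof.
move=> UC; rewrite is_LTE_cesaro_mean; apply: cesaro_mean_cvg; apply: cvg_near_cst.
exists 1%N => // t t_ge1.
by rewrite engagement_Cs_set0 ?(Cs_set0_after (UC_Cs1_set0 UC)) //; case: UC.
Qed.

End Instance.

Theorem theorem3 (R : realType) (n m : nat) :
  (0 < n)%N -> (0 < m)%N ->
  exists (D U C : nat) (u : 'I_U -> 'I_D -> R) (c : 'I_C -> 'I_D -> R)
         (K abar : nat) (ebar : R),
    [/\ (n <= U)%N, (m <= C)%N, valid_instance u c K ebar &
      exists (FL : recseq U C) (Lfl : R),
        [/\ is_FL u c K abar ebar FL Lfl, 0 < Lfl &
          forall UC : recseq U C, is_UC u c K abar ebar UC ->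
            exists Luc : R, is_LTE u c K abar ebar UC Luc /\ Luc / Lfl = 0]].
Proof.
move=> N_gt1 m_gt0.
exists n.+2, n.+1, (n.+1 + m)%N, (@user R n.+1), (@creator R n.+1 m), 1%N, n.+1, (threshold R).
split; [exact: leqnSn | exact: leq_addl | exact: instance_valid |].
exists (mainstream_rec m_gt0), (n.+1%:R * (3/5)); split.
- exact: (@mainstream_rec_FL R n.+1 m N_gt1 m_gt0).
- by rewrite mulr_gt0 //; lra.
- move=> Rs UC; exists 0; split; last by rewrite mul0r.
  exact: (@UC_LTE0 R n.+1 m N_gt1 Rs UC).
Qed.
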